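(* Let $n\ge 1$, $i\in\{1,\ldots,n-1\}$, and let $C$ be an $s_i$-stable set of transpositions in $S_n$ (i.e. $s_i\in C$ and $s_iCs_i=C$). Let $H_C^{*s_i}=\{f\in H_C\mid f*s_i=f\}$. Then $H_C^{*s_i}$ and $(x_i-x_{i+1})H_C^{*s_i}$ are $\mathbb{C}[t_1,\ldots,t_n]$-submodules of $H$ stable under the dot action, and $$H_C=H_C^{*s_i}\oplus (x_i-x_{i+1})H_C^{*s_i}$$ is an internal direct sum decomposition of $\mathbb{C}[t_1,\ldots,t_n]$-submodules of $H$ equipped with the dot action.
   Context: Let $S_n$ be the symmetric group on $\{1,\ldots,n\}$ with $(vw)(j)=v(w(j))$, and $s_i=(i\leftrightarrow i+1)$. Let $H=\mathrm{Fun}(S_n,\mathbb{C}[t_1,\ldots,t_n])$ with pointwise operations; it is a $\mathbb{C}[t_1,\ldots,t_n]$-module via constant functions. The star action (right) is $(f*w)(v;t_1,\ldots,t_n)=f(vw^{-1};t_1,\ldots,t_n)$, and the dot action (left) is $(w\cdot f)(v;t_1,\ldots,t_n)=f(w^{-1}v;t_{w(1)},\ldots,t_{w(n)})$. Let $x_i\in H$ be the function $v\mapsto t_{v(i)}$. For a transposition $\tau=(i\leftrightarrow k)$, $f\in H$ satisfies condition $\tau$ if $f-f*\tau=(x_i-x_k)g$ for some $g\in H$; these form a subring $H_\tau$, and for a set $C$ of transpositions $H_C=\bigcap_{\tau\in C}H_\tau$ (with $H_\varnothing=H$). *)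

From HB Require Import structures.
From mathcomp Require Import all_boot all_order all_algebra all_fingroup.
From mathcomp Require Import mpoly.
From mathcomp Require Import complex.
From mathcomp Require Import reals.
Set Implicit Arguments. Unset Strict Implicit. Unset Printing Implicit Defensive.
Import GRing.Theory.
Local Open Scope ring_scope.

Section GKM.
(* complex numbers = R[i] for a (Dedekind-complete) real field R, e.g. the reals *)
Variable R : realType.
Variable n : nat.

Definition CC := complex R.
(* the polynomial ring C[t_1,...,t_n]; variable t_{j+1} is 'X_j (0-based) *)
Definition Pol := {mpoly CC[n]}.
(* H = Fun(S_n, C[t_1..t_n]) with pointwise operations *)
Definition Hfun := 'S_n -> Pol.

(* the paper's composition (v w)(j) = v (w j); mathcomp's (w * v)%g x = v (w x) *)
Definition pmulc (v w : 'S_n) : 'S_n := (w * v)%g.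

Definition star (f : Hfun) (w : 'S_n) : Hfun := fun v => f (pmulc v (w^-1)%g).

(* dot action (left): (w . f)(v; t) = f(w^{-1} v; t_{w(1)},...,t_{w(n)}) *)
Definition dot (w : 'S_n) (f : Hfun) : Hfun := fun v => msym w (f (pmulc (w^-1)%g v)).

Definition xx (i : 'I_n) : Hfun := fun v => 'X_(v i).

Definition cond_tau (tau : 'S_n) (f : Hfun) : Prop :=
  forall a b : 'I_n, a != b -> tau = tperm a b ->
    exists g : Hfun, forall v, f v - star f tau v = (xx a v - xx b v) * g v.

Definition is_transposition (tau : 'S_n) : Prop :=
  exists a b : 'I_n, a != b /\ tau = tperm a b.

Definition H_C (C : {set 'S_n}) (f : Hfun) : Prop :=
  forall tau, tau \in C -> cond_tau tau f.

Definition H_C_inv (C : {set 'S_n}) (s : 'S_n) (f : Hfun) : Prop :=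
  H_C C f /\ forall v, star f s v = f v.

Definition mul_diff (i k : 'I_n) (A : Hfun -> Prop) (f : Hfun) : Prop :=
  exists g, A g /\ forall v, f v = (xx i v - xx k v) * g v.

(* C[t_1..t_n]-submodule of H (module structure via constant functions) *)
Definition is_submodule (A : Hfun -> Prop) : Prop :=
  A (fun _ => 0) /\
  (forall f g, A f -> A g -> A (fun v => f v + g v)) /\
  (forall (p : Pol) f, A f -> A (fun v => p * f v)).

Definition dot_stable (A : Hfun -> Prop) : Prop :=
  forall w f, A f -> A (dot w f).

Definition internal_direct_sum (D A B : Hfun -> Prop) : Prop :=
  (forall f, D f <-> exists g h, A g /\ B h /\ forall v, f v = g v + h v) /\
  (forall f, A f -> B f -> forall v, f v = 0).

End GKM.

Arguments H_C R {n} C f.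
Arguments H_C_inv R {n} C s f.
Arguments cond_tau R {n} tau f.

(* Condition (a b) at a point v says that f v and f (v (a b)) agree modulo
   t_{v a} - t_{v b}, i.e. after substituting t_{v b} for t_{v a}.  For f in H_C,
   condition s_i yields f - f * s_i = (x_i - x_{i+1}) G.  Since x_i - x_{i+1} is
   anti-invariant under * s_i, G is invariant; and G lies in H_C: for another
   transposition tau in C, conditions tau and s_i tau s_i on f give, after the
   substitution, the same congruence for (x_i - x_{i+1}) G, in which the factor
   x_i - x_{i+1} survives the substitution and can be cancelled.  Then
   f = (f - (x_i - x_{i+1}) G/2) + (x_i - x_{i+1}) G/2, and the sum is direct
   because a function that is both invariant and anti-invariant under * s_i is
   zero in characteristic 0. *)

From HB Require Import structures.
From mathcomp Require Import all_boot all_order all_algebra all_fingroup.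
From mathcomp Require Import mpoly complex reals ring.
Set Implicit Arguments. Unset Strict Implicit. Unset Printing Implicit Defensive.
Import GRing.Theory Num.Theory.
Local Open Scope ring_scope.

Lemma mpoly_subring_ind (K : nzRingType) (m : nat) (Q : {mpoly K[m]} -> Prop) :
  (forall c, Q c%:MP) -> (forall j, Q 'X_j) ->
  (forall p q, Q p -> Q q -> Q (p + q)) -> (forall p q, Q p -> Q q -> Q (p * q)) ->
  forall p, Q p.
Proof.
move=> QC QX QD QM; have Q1 : Q 1 by rewrite -mpolyC1.
elim/mpolyind => [|c mn p _ _ Qp]; first by rewrite -mpolyC0.
apply: QD Qp; rewrite -mul_mpolyC mpolyXE_id; apply: (QM _ _ (QC c)).
apply: (big_ind Q Q1 QM) => j _; elim: (mn j) => [|e IHe]; first by rewrite expr0.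
by rewrite exprS; apply: (QM).
Qed.

Section Conditions.
Variables (R : realType) (n : nat).
Local Notation P := (Pol R n).

Definition substX (a b : 'I_n) (p : P) : P :=
  mmap (@mpolyC n (CC R)) (fun j => 'X_(if j == a then b else j)) p.

Lemma substXD a b : {morph substX a b : p q / p + q}. Proof. exact: rmorphD. Qed.
Lemma substXB a b : {morph substX a b : p q / p - q}. Proof. exact: rmorphB. Qed.
Lemma substXM a b : {morph substX a b : p q / p * q}. Proof. exact: rmorphM. Qed.

Lemma substXC a b c : substX a b c%:MP = c%:MP.
Proof. exact: mmapC. Qed.

Lemma substX_X a b j : substX a b 'X_j = 'X_(if j == a then b else j).
Proof. by rewrite /substX mmapX mmap1U. Qed.

Definition dvdXsubX (a b : 'I_n) (p : P) := exists q, p = ('X_a - 'X_b) * q.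

Lemma dvdXsubX_sub_substX a b p : dvdXsubX a b (p - substX a b p).
Proof.
elim/mpoly_subring_ind: p => [c | j | p q [u Eu] [w Ew] | p q [u Eu] [w Ew]].
- by exists 0; rewrite substXC subrr mulr0.
- rewrite substX_X; case: eqP => [->|_]; first by exists 1; rewrite mulr1.
  by exists 0; rewrite subrr mulr0.
- by exists (u + w); rewrite substXD mulrDr -Eu -Ew opprD addrACA.
- exists (p * w + substX a b q * u).
  have -> : p * q - substX a b (p * q) =
      p * (q - substX a b q) + substX a b q * (p - substX a b p).
    by rewrite substXM; move: (substX a b p) (substX a b q) => sp sq; ring.
  by rewrite Eu Ew; move: (substX a b q) => sq; ring.
Qed.

Lemma dvdXsubXP a b p : dvdXsubX a b p <-> substX a b p = 0.
Proof.
split=> [[q ->] | sp0]; last by have := dvdXsubX_sub_substX a b p; rewrite sp0 subr0.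
by rewrite substXM substXB !substX_X eqxx if_same subrr mul0r.
Qed.

Lemma X_inj : injective (fun j : 'I_n => 'X_j : P).
Proof.
move=> a b /(congr1 (mcoeff U_(a))); rewrite /= !mcoeffXU eqxx.
by case: eqP => // _ /eqP; rewrite oner_eq0.
Qed.

Lemma substX_Xperm (v : 'S_n) a b j :
  substX (v a) (v b) 'X_(v (tperm a b j)) = substX (v a) (v b) 'X_(v j).
Proof. by rewrite !substX_X; case: tpermP => [->|->|//]; rewrite eqxx if_same. Qed.

Lemma substX_XsubX_neq0 a b r t :
  r != t -> tperm r t != tperm a b -> substX a b ('X_r - 'X_t) != 0.
Proof.
move=> rt; apply: contraNN; rewrite substXB !substX_X subr_eq0 => /eqP /X_inj.
have [ra|ra] := eqVneq r a; have [ta|ta] := eqVneq t a.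
- by rewrite ra ta eqxx in rt.
- by move=> bt; rewrite ra -bt.
- by move=> rb; rewrite ta rb tpermC.
- by move=> rt'; rewrite rt' eqxx in rt.
Qed.

Lemma msym_X (w : 'S_n) j : msym w ('X_j : P) = 'X_(w j).
Proof. by rewrite /msym mmapX mmap1U. Qed.

Local Notation F := (Hfun R n).
Implicit Types (f g : F) (C : {set 'S_n}) (v w : 'S_n).

Lemma pmulcE v w x : pmulc v w x = v (w x).
Proof. by rewrite /pmulc permM. Qed.

Lemma pmulcA u v w : pmulc u (pmulc v w) = pmulc (pmulc u v) w.
Proof. by rewrite /pmulc mulgA. Qed.

Lemma star_tperm f a b v : star f (tperm a b) v = f (pmulc v (tperm a b)).
Proof. by rewrite /star tpermV. Qed.

Lemma star_dot f w u v : star (dot w f) u v = dot w (star f u) v.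
Proof. by rewrite /star /dot pmulcA. Qed.

Definition cond_substX (tau : 'S_n) f := forall a b : 'I_n, a != b -> tau = tperm a b ->
  forall v, substX (v a) (v b) (f v) = substX (v a) (v b) (star f tau v).

Lemma cond_tauP tau f : cond_tau R tau f <-> cond_substX tau f.
Proof.
split=> Hf a b ab e.
- move=> v; have [g Eg] := Hf a b ab e; apply/eqP; rewrite -subr_eq0 -substXB.
  by apply/eqP/dvdXsubXP; exists (g v); exact: Eg.
- have /boolp.choice [g Eg] : forall v, dvdXsubX (v a) (v b) (f v - star f tau v).
    by move=> v; apply/dvdXsubXP; rewrite substXB (Hf a b ab e) subrr.
  by exists g => v; exact: Eg.
Qed.

Lemma H_CP C f : H_C R C f <-> forall tau, tau \in C -> cond_substX tau f.
Proof. by split=> Hf tau /Hf /cond_tauP. Qed.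

Lemma H_C_ext C f g : f =1 g -> H_C R C f -> H_C R C g.
Proof.
move=> fg /H_CP Hf; apply/H_CP => tau tC a b ab e v.
by rewrite /star -!fg; exact: Hf.
Qed.

Lemma H_C_const C p : H_C R C (fun=> p).
Proof. by apply/H_CP. Qed.

Lemma H_CD C f g : H_C R C f -> H_C R C g -> H_C R C (fun v => f v + g v).
Proof.
move=> /H_CP Hf /H_CP Hg; apply/H_CP => tau tC a b ab e v.
by rewrite /star !substXD (Hf tau tC a b ab e) (Hg tau tC a b ab e).
Qed.

Lemma H_CB C f g : H_C R C f -> H_C R C g -> H_C R C (fun v => f v - g v).
Proof.
move=> /H_CP Hf /H_CP Hg; apply/H_CP => tau tC a b ab e v.
by rewrite /star !substXB (Hf tau tC a b ab e) (Hg tau tC a b ab e).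
Qed.

Lemma H_CM C f g : H_C R C f -> H_C R C g -> H_C R C (fun v => f v * g v).
Proof.
move=> /H_CP Hf /H_CP Hg; apply/H_CP => tau tC a b ab e v.
by rewrite /star !substXM (Hf tau tC a b ab e) (Hg tau tC a b ab e).
Qed.

Lemma H_C_xx C r : H_C R C (xx R r).
Proof.
apply/H_CP => tau _ a b _ -> v.
by rewrite star_tperm /xx pmulcE substX_Xperm.
Qed.

Lemma H_C_mul_xsub C r t g :
  H_C R C g -> H_C R C (fun v => (xx R r v - xx R t v) * g v).
Proof. exact/H_CM/H_CB/H_C_xx/H_C_xx. Qed.

Lemma H_C_dot C w f : H_C R C f -> H_C R C (dot w f).
Proof.
move=> Hf tau tC a b ab e; have [g Eg] := Hf tau tC a b ab e.
exists (dot w g) => v; rewrite /dot /star pmulcA -msymB.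
have := Eg (pmulc w^-1 v); rewrite /star => ->.
by rewrite msymM msymB /xx !msym_X !pmulcE !permKV.
Qed.

Lemma H_C_inv_submodule C u : is_submodule (H_C_inv R C u).
Proof.
split; [|split].
- by split; [exact: H_C_const|].
- move=> f g [Hf sf] [Hg sg]; split; first exact: H_CD.
  by move=> v; exact: (congr2 +%R (sf v) (sg v)).
- move=> p f [Hf sf]; split; first by apply: H_CM => //; exact: H_C_const.
  by move=> v; exact: (congr1 ( *%R p) (sf v)).
Qed.

Lemma H_C_inv_dot_stable C u : dot_stable (H_C_inv R C u).
Proof.
move=> w f [Hf sf]; split; first exact: H_C_dot.
by move=> v; rewrite star_dot /dot sf.
Qed.

Lemma mul_diff_submodule r t (A : F -> Prop) :
  is_submodule A -> is_submodule (mul_diff r t A).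
Proof.
move=> [A0 [AD AM]]; split; [|split].
- by exists (fun=> 0); split=> // v; rewrite mulr0.
- move=> f1 f2 [g1 [Ag1 E1]] [g2 [Ag2 E2]]; exists (fun v => g1 v + g2 v).
  by split=> [|v]; [exact: AD | rewrite E1 E2 mulrDr].
- move=> p f [g [Ag Eg]]; exists (fun v => p * g v).
  by split=> [|v]; [exact: AM | rewrite Eg mulrCA].
Qed.

Lemma mul_diff_dot_stable r t (A : F -> Prop) :
  dot_stable A -> dot_stable (mul_diff r t A).
Proof.
move=> dA w f [g [Ag Eg]]; exists (dot w g); split; first exact: dA.
by move=> v; rewrite /dot Eg msymM msymB /xx !msym_X !pmulcE !permKV.
Qed.

Lemma pmulc_tpermK v a b : pmulc (pmulc v (tperm a b)) (tperm a b) = v.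
Proof. by apply/permP => x; rewrite !pmulcE tpermK. Qed.

Section Transposition.
Variables (i k : 'I_n) (ik : i != k).
Local Notation s := (tperm i k).
Local Notation xsub v := (xx R i v - xx R k v).

Lemma xsub_tperm v : xsub (pmulc v s) = - xsub v.
Proof. by rewrite /xx !pmulcE tpermL tpermR opprB. Qed.

Lemma xsub_neq0 v : xsub v != 0.
Proof. by rewrite subr_eq0; apply/eqP => /X_inj /perm_inj /eqP; rewrite (negbTE ik). Qed.

Lemma star_quotient f G :
  (forall v, f v - star f s v = xsub v * G v) -> forall v, star G s v = G v.
Proof.
move=> E v; have Ev := E v; have Evs := E (pmulc v s).
rewrite !star_tperm pmulc_tpermK xsub_tperm in Ev Evs.
rewrite -opprB Ev mulNr in Evs.
by rewrite star_tperm; apply/esym/(mulfI (xsub_neq0 v))/oppr_inj.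
Qed.

Lemma H_C_quotient C f G : (forall c, c \in C -> (c ^ s)%g \in C) -> H_C R C f ->
  (forall v, f v - star f s v = xsub v * G v) -> H_C R C G.
Proof.
move=> sCs /H_CP Hf E; apply/H_CP => tau tC a b ab e v.
have [taus | tau_s] := eqVneq tau s; first by rewrite taus (star_quotient E).
have Hfv := Hf tau tC a b ab e v.
have sab : s a != s b by rewrite (inj_eq perm_inj).
have tau'C : tperm (s a) (s b) \in C by rewrite -tpermJ -e; exact: sCs.
have Hfvs := Hf _ tau'C (s a) (s b) sab erefl (pmulc v s).
rewrite e !star_tperm in Hfv *; rewrite star_tperm !pmulcE !tpermK in Hfvs.
set Q := pmulc v (tperm a b) in Hfv Hfvs *.
have vsQ : pmulc (pmulc v s) (tperm (s a) (s b)) = pmulc Q s.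
  by apply/permP => x; rewrite -tpermJ !pmulcE tpermK tpermV.
rewrite vsQ in Hfvs.
have xsubQ : substX (v a) (v b) (xsub Q) = substX (v a) (v b) (xsub v).
  by rewrite !substXB /xx !pmulcE !substX_Xperm.
have xsub_neq0 : substX (v a) (v b) (xsub v) != 0.
  apply: substX_XsubX_neq0; first by rewrite (inj_eq perm_inj).
  by rewrite -!tpermJ (inj_eq (conjg_inj _)) eq_sym -e.
have : substX (v a) (v b) (xsub v * G v) = substX (v a) (v b) (xsub Q * G Q).
  by rewrite -E -E !substXB !star_tperm Hfv Hfvs.
by rewrite !substXM xsubQ => /(mulfI xsub_neq0).
Qed.

Lemma H_C_tperm_decomp C f : s \in C -> (forall c, c \in C -> (c ^ s)%g \in C) ->
  H_C R C f -> exists g h,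
  [/\ H_C_inv R C s g, H_C_inv R C s h & forall v, f v = g v + xsub v * h v].
Proof.
move=> sC sCs Hf; have [G E] := Hf s sC i k ik erefl.
have G_inv := star_quotient E.
have [_ [_ H_C_invZ]] := H_C_inv_submodule C s.
pose h v := (2^-1 : CC R)%:MP * G v.
have Ah : H_C_inv R C s h by apply: H_C_invZ; split; [exact: H_C_quotient E | exact: G_inv].
have half2 : (2^-1 + 2^-1 : CC R) = 1 by field.
have G_half v : G v = h v + h v by rewrite -mulrDl -mpolyCD half2 mpolyC1 mul1r.
exists (fun v => f v - xsub v * h v), h; split; [|exact: Ah|by move=> v; rewrite subrK].
split=> [|v]; first by apply: H_CB Hf _; apply: H_C_mul_xsub; case: Ah.
have Efs : f (pmulc v s) = f v - xsub v * G v by rewrite -E star_tperm; ring.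
rewrite star_tperm /= Efs xsub_tperm (_ : h (pmulc v s) = h v); last first.
  by have := Ah.2 v; rewrite star_tperm.
by rewrite G_half; ring.
Qed.

Lemma star_inv_mul_xsub_eq0 f g : (forall v, star f s v = f v) ->
  (forall v, star g s v = g v) -> (forall v, f v = xsub v * g v) -> forall v, f v = 0.
Proof.
move=> sf sg Ef v; have := sf v.
rewrite star_tperm Ef xsub_tperm mulNr (_ : g (pmulc v s) = g v); last first.
  by have := sg v; rewrite star_tperm.
rewrite -Ef => /eqP; rewrite eq_sym -subr_eq0 opprK -mulr2n -mulr_natr mulf_eq0.
by rewrite -mpolyC_nat mpolyC_eq0 pnatr_eq0 orbF => /eqP.
Qed.

Lemma H_C_direct_sum C : s \in C -> (forall c, c \in C -> (c ^ s)%g \in C) ->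
  internal_direct_sum (H_C R C) (H_C_inv R C s) (mul_diff i k (H_C_inv R C s)).
Proof.
move=> sC sCs; split=> [f|f [_ sf] [g [[_ sg] Ef]]]; last exact: star_inv_mul_xsub_eq0 sf sg Ef.
split=> [Hf | [g [h [[Hg _] [[u [[Hu _] Eu]] Efgh]]]]].
  have [g [h [Ag Ah Ef]]] := H_C_tperm_decomp sC sCs Hf.
  by exists g, (fun v => xsub v * h v); split=> //; split=> //; exists h.
apply: (@H_C_ext _ (fun v => g v + xsub v * u v)) => [v | ]; first by rewrite Efgh Eu.
by apply: H_CD Hg _; apply: H_C_mul_xsub.
Qed.

End Transposition.
End Conditions.

Theorem theorem1 (R : realType) (n : nat) (i : 'I_n) (Hi : (i.+1 < n)%N)
  (C : {set 'S_n}) :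
  let i1 : 'I_n := Ordinal Hi in
  let s : 'S_n := tperm i i1 in
  (forall tau, tau \in C -> is_transposition tau) ->
  s \in C ->
  [set pmulc (pmulc s c) s | c in C] = C ->
  is_submodule (H_C_inv R C s) /\ dot_stable (H_C_inv R C s) /\
  is_submodule (mul_diff i i1 (H_C_inv R C s)) /\
  dot_stable (mul_diff i i1 (H_C_inv R C s)) /\
  internal_direct_sum (H_C R C) (H_C_inv R C s) (mul_diff i i1 (H_C_inv R C s)).
Proof.
(* cond_tau is vacuous unless tau is a transposition. *)
move=> i1 s _ sC sCs.
have ii1 : i != i1 by rewrite -val_eqE /= ltn_eqF.
have sCs' c : c \in C -> (c ^ s)%g \in C.
  by move=> cC; rewrite -sCs /conjg tpermV; apply: imset_f.
split; first exact: H_C_inv_submodule.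
split; first exact: H_C_inv_dot_stable.
split; first exact/mul_diff_submodule/H_C_inv_submodule.
split; first exact/mul_diff_dot_stable/H_C_inv_dot_stable.
exact: H_C_direct_sum.
Qed.
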